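(* Let $\mathcal{X}$ and $\mathcal{S}(\beta)$ be as defined in the context, let $\alpha\in(0,1)$, and let $\theta=\lfloor\alpha|H_K|\rfloor$. Assume the minimum $$\beta^*=\min\{\beta\ge0:\ \exists (x,\underline d,y)\in\mathcal{S}(\beta)\text{ with }\|y\|_0\le\theta\}$$ exists. For $\Theta\ge0$ let (P$_\Theta$) be the linear program of maximizing $\underline d$ over $(x,\underline d,y)\in\mathcal{X}$ subject to the budget constraint $\sum_{v\in H_K}y_v\le\Theta$, and assume (P$_\Theta$) has an optimal solution for the values of $\Theta$ below. Let $\lambda_u\ge0$ be an optimal dual variable (Lagrange multiplier) of the budget constraint in (P$_0$), and, for $\epsilon>0$, let $\lambda_l\ge0$ be an optimal dual variable of the budget constraint in (P$_\Theta$) with $\Theta=\theta(\hat d_K-\bar d_K)+\epsilon$. Then $\lambda_l\le\beta^*\le\lambda_u$.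
   Context: Setting: $[m]=T\cup H_1\cup\dots\cup H_K$ is a disjoint partition with $T\ne\emptyset$; $D\in\mathbb{R}^{m\times n}$ is entrywise nonnegative and $d_v(x)=\sum_i D_{vi}x_i$; $\mu>1$; $\bar d_1,\dots,\bar d_K$ and $\hat d_K>\bar d_K$ are real; $\underline\phi_v,\bar\phi_v\in[0,1]$ ($v\in T$) and $\gamma_{uv}\ge0$ are given constants. $\mathcal{X}$ is the set of $(x,\underline d,y)\in\mathbb{R}^n_+\times\mathbb{R}\times\mathbb{R}^{H_K}_+$ satisfying: $\underline\phi_v d_v(x)\ge\underline d$ ($v\in T$); $\bar\phi_v d_v(x)-\mu\max\{\bar\phi_v-\gamma_{vu},\underline\phi_u\}d_u(x)\le0$ and $\min\{\underline\phi_u+\gamma_{vu},\bar\phi_v\}d_v(x)-\mu\underline\phi_u d_u(x)\le0$ ($u\ne v\in T$); $d_v(x)\le\bar d_k$ ($k\in[K-1]$, $v\in H_k$); $d_v(x)-y_v\le\bar d_K$ and $y_v\le\hat d_K-\bar d_K$ ($v\in H_K$). For $\beta\ge0$, $\mathcal{S}(\beta)=\arg\max\{\underline d-\beta\sum_{v\in H_K}y_v:(x,\underline d,y)\in\mathcal{X}\}$. $\|y\|_0$ is the number of nonzero components of $y$. An optimal dual variable $\lambda\ge0$ of the budget constraint in (P$_\Theta$) means $\lambda\Theta+\max_{\mathcal{X}}\{\underline d-\lambda\sum_{v}y_v\}=\min_{\beta\ge0}\big(\beta\Theta+\max_{\mathcal{X}}\{\underline d-\beta\sum_v y_v\}\big)$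 equals the optimal value of (P$_\Theta$). *)

From mathcomp Require Import all_boot all_order all_algebra.
Set Implicit Arguments. Unset Strict Implicit. Unset Printing Implicit Defensive.
Import Order.TTheory GRing.Theory Num.Theory.
Local Open Scope ring_scope.

Section Defs.
Variables (R : archiRealFieldType) (m n K : nat).
(* Partition of [m]: part v = None  <-> v \in T ;  part v = Some k <-> v \in H_(k+1).
   H_K is the block indexed by ord_max. *)
Variable part : 'I_m -> option 'I_K.+1.
Variable D : 'M[R]_(m, n).
Variables (mu : R) (dbar : 'I_K.+1 -> R) (dhat : R).
Variables (phil phib : 'I_m -> R) (gamma : 'I_m -> 'I_m -> R).

Definition inT (v : 'I_m) : bool := part v == None.
Definition inHK (v : 'I_m) : bool := part v == Some ord_max.
Definition HKset : {set 'I_m} := [set v | inHK v].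

Definition dv (x : 'I_n -> R) (v : 'I_m) : R := \sum_(i < n) D v i * x i.

(* a point (x, d_, y); y : R^{H_K} is encoded as y : 'I_m -> R vanishing off H_K *)
Definition point := (('I_n -> R) * R * ('I_m -> R))%type.

Definition sumy (y : 'I_m -> R) : R := \sum_(v | inHK v) y v.

Definition l0norm (y : 'I_m -> R) : nat := #|[set v | inHK v & y v != 0]|.

Definition inX (p : point) : Prop :=
  let: (x, dl, y) := p in
  (forall i, 0 <= x i) /\
  (forall v, ~~ inHK v -> y v = 0) /\
  (forall v, inHK v -> 0 <= y v) /\
  (forall v, inT v -> dl <= phil v * dv x v) /\
  (forall u v, inT u -> inT v -> u != v ->
     (phib v * dv x v - mu * Num.max (phib v - gamma v u) (phil u) * dv x u <= 0)
     /\ (Num.min (phil u + gamma v u) (phib v) * dv x v - mu * phil u * dv x u <= 0)) /\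
  (forall v k, part v = Some k -> k != ord_max -> dv x v <= dbar k) /\
  (forall v, inHK v -> dv x v - y v <= dbar ord_max) /\
  (forall v, inHK v -> y v <= dhat - dbar ord_max).

Definition obj (beta : R) (p : point) : R := p.1.2 - beta * sumy p.2.

Definition Sbeta (beta : R) (p : point) : Prop :=
  inX p /\ forall q, inX q -> obj beta q <= obj beta p.

Definition lag_max (beta M : R) : Prop :=
  (exists p, inX p /\ obj beta p = M) /\ forall p, inX p -> obj beta p <= M.

Definition feasP (Theta : R) (p : point) : Prop := inX p /\ sumy p.2 <= Theta.
Definition optsolP (Theta : R) (p : point) : Prop :=
  feasP Theta p /\ forall q, feasP Theta q -> q.1.2 <= p.1.2.
Definition optvalP (Theta V : R) : Prop :=
  exists p, optsolP Theta p /\ p.1.2 = V.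

(* lambda >= 0 is an optimal dual variable of the budget constraint in (P_Theta):
   lambda*Theta + max_X{d_ - lambda sum y}
     = min_{beta >= 0} (beta*Theta + max_X{d_ - beta sum y}) = opt(P_Theta).
   (beta for which the inner max does not exist have value +oo.) *)
Definition opt_dual (Theta lambda : R) : Prop :=
  0 <= lambda /\
  exists Ml V, [/\ lag_max lambda Ml, optvalP Theta V,
                   lambda * Theta + Ml = V &
                   forall beta M, 0 <= beta -> lag_max beta M ->
                     lambda * Theta + Ml <= beta * Theta + M].

End Defs.

(** An optimal dual variable [lambda] of the budget [sumy y <= Theta] minimises
    [beta * Theta + max_X (d_ - beta * sumy y)] over [beta >= 0].  Comparing the values at
    [lambda] and at [beta] along a maximiser [p] of the [beta]-Lagrangian gives
    [(lambda - beta) * (Theta - sumy p) <= 0], so [lambda <= beta] as soon as [p] leaves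
    slack in the budget.  A point of [S(beta_star)] with at most [theta] nonzero
    [y_v <= dhat - dbar_K] has [sumy y <= theta (dhat - dbar_K) < Theta], whence
    [lambda_l <= beta_star].  For [Theta = 0], an optimal solution of (P_0) has [y = 0]
    and attains the [lambda_u]-Lagrangian maximum, so it lies in [S(lambda_u)] with
    [||y||_0 = 0], whence [beta_star <= lambda_u] by minimality. *)
From mathcomp Require Import all_boot all_order all_algebra.
From mathcomp Require Import lra.
Set Implicit Arguments. Unset Strict Implicit. Unset Printing Implicit Defensive.
Import Order.TTheory GRing.Theory Num.Theory.
Local Open Scope ring_scope.

Section LagrangianDual.
Variables (R : archiRealFieldType) (m n K : nat).
Variable part : 'I_m -> option 'I_K.+1.
Variable D : 'M[R]_(m, n).
Variables (mu : R) (dbar : 'I_K.+1 -> R) (dhat : R).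
Variables (phil phib : 'I_m -> R) (gamma : 'I_m -> 'I_m -> R).

Local Notation inHK := (inHK part).
Local Notation sumy := (sumy part).
Local Notation l0norm := (l0norm part).
Local Notation obj := (obj part).
Local Notation inX := (inX part D mu dbar dhat phil phib gamma).
Local Notation Sbeta := (Sbeta part D mu dbar dhat phil phib gamma).
Local Notation lag_max := (lag_max part D mu dbar dhat phil phib gamma).
Local Notation opt_dual := (opt_dual part D mu dbar dhat phil phib gamma).

Lemma sumy_le_l0norm (y : 'I_m -> R) (c : R) :
  (forall v, inHK v -> y v <= c) -> sumy y <= c *+ l0norm y.
Proof.
move=> le_y_c; rewrite /sumy /l0norm.
apply: (@le_trans _ _ (\sum_(v | inHK v) (if y v != 0 then c else 0))).
  by apply: ler_sum => v HKv; case: eqP => [->|_] //=; exact: le_y_c.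
rewrite -big_mkcondr (eq_bigl [in [set v | inHK v & y v != 0]]) ?sumr_const //.
by move=> v; rewrite inE.
Qed.

Lemma l0norm_eq0 (y : 'I_m -> R) :
  (forall v, inHK v -> 0 <= y v) -> sumy y = 0 -> l0norm y = 0%N.
Proof.
move=> y_ge0 /eqP; rewrite /sumy psumr_eq0 // => /allP y_eq0.
apply/eqP; rewrite cards_eq0; apply/eqP/setP => v; rewrite !inE.
apply/negbTE; case HKv: (inHK v) => //=; rewrite negbK.
exact: implyP (y_eq0 v (mem_index_enum _)) HKv.
Qed.

Lemma inX_y_ge0 (p : point R m n) : inX p -> forall v, inHK v -> 0 <= p.2 v.
Proof. by case: p => [[x dl] y] [_ [_ []]]. Qed.

Lemma inX_y_le (p : point R m n) :
  inX p -> forall v, inHK v -> p.2 v <= dhat - dbar ord_max.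
Proof. by case: p => [[x dl] y] [_ [_ [_ [_ [_ [_ []]]]]]]. Qed.

Lemma sumy_ge0 (p : point R m n) : inX p -> 0 <= sumy p.2.
Proof. by move=> Xp; apply: sumr_ge0; exact: inX_y_ge0. Qed.

Lemma Sbeta_lag_max (beta : R) (p : point R m n) :
  Sbeta beta p -> lag_max beta (obj beta p).
Proof. by case=> Xp p_max; split=> //; exists p. Qed.

Lemma opt_dual_le (Theta lambda beta : R) (p : point R m n) :
  opt_dual Theta lambda -> 0 <= beta -> Sbeta beta p -> sumy p.2 < Theta ->
  lambda <= beta.
Proof.
move=> [_ [Ml [V [[_ Ml_max] _ _ lambda_min]]]] beta_ge0 Sp slack.
have le_obj := Ml_max p Sp.1.
have le_dual := lambda_min beta _ beta_ge0 (Sbeta_lag_max Sp).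
rewrite /obj in le_obj le_dual.
have : (lambda - beta) * (Theta - sumy p.2) <= 0 by lra.
by rewrite pmulr_lle0 ?subr_gt0 // subr_le0.
Qed.

Lemma opt_dual0_Sbeta (lambda : R) :
  opt_dual 0 lambda -> exists p, Sbeta lambda p /\ l0norm p.2 = 0%N.
Proof.
move=> [_ [Ml [V [[_ Ml_max] [p [[[Xp sumy_le0] _] dl_eqV]] Ml_eqV _]]]].
have sumy0 : sumy p.2 = 0 by apply/eqP; rewrite eq_le sumy_le0 sumy_ge0.
exists p; split; last exact: l0norm_eq0 (inX_y_ge0 Xp) sumy0.
split=> // q Xq; apply: le_trans (Ml_max q Xq) _.
by rewrite /obj sumy0 mulr0 subr0 dl_eqV -Ml_eqV mulr0 add0r.
Qed.

End LagrangianDual.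

Theorem lemmaB1 (R : archiRealFieldType) (m n K : nat)
  (part : 'I_m -> option 'I_K.+1) (D : 'M[R]_(m, n))
  (mu : R) (dbar : 'I_K.+1 -> R) (dhat : R)
  (phil phib : 'I_m -> R) (gamma : 'I_m -> 'I_m -> R)
  (hT : exists v, inT part v)
  (hD : forall v i, 0 <= D v i)
  (hmu : 1 < mu)
  (hdhat : dbar ord_max < dhat)
  (hphil : forall v, inT part v -> 0 <= phil v <= 1)
  (hphib : forall v, inT part v -> 0 <= phib v <= 1)
  (hgamma : forall u v, 0 <= gamma u v)
  (alpha : R) (halpha : 0 < alpha < 1)
  (betastar : R)
  (hbmin_in : 0 <= betastar /\
     exists p, Sbeta part D mu dbar dhat phil phib gamma betastar p /\
       ((l0norm part p.2)%:Z <= Num.floor (alpha * (#|HKset part|)%:R))%R)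
  (hbmin_le : forall beta, 0 <= beta ->
     (exists p, Sbeta part D mu dbar dhat phil phib gamma beta p /\
       ((l0norm part p.2)%:Z <= Num.floor (alpha * (#|HKset part|)%:R))%R) ->
     betastar <= beta)
  (eps : R) (heps : 0 < eps)
  (hP0 : exists p, optsolP part D mu dbar dhat phil phib gamma 0 p)
  (hPT : exists p, optsolP part D mu dbar dhat phil phib gamma
           ((Num.floor (alpha * (#|HKset part|)%:R))%:~R * (dhat - dbar ord_max) + eps) p)
  (lamu laml : R)
  (hlamu : opt_dual part D mu dbar dhat phil phib gamma 0 lamu)
  (hlaml : opt_dual part D mu dbar dhat phil phib gamma
           ((Num.floor (alpha * (#|HKset part|)%:R))%:~R * (dhat - dbar ord_max) + eps) laml) :
  laml <= betastar <= lamu.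
Proof.
set theta := Num.floor _ in hbmin_in hbmin_le hlaml *.
have theta_ge0 : 0 <= theta by rewrite floor_ge0 mulr_ge0 ?ler0n //; lra.
case: hbmin_in => betastar_ge0 [p [Sp l0p_le]].
apply/andP; split.
- have sumy_le := sumy_le_l0norm (inX_y_le Sp.1).
  apply: opt_dual_le hlaml betastar_ge0 Sp _.
  have : (l0norm part p.2)%:R <= theta%:~R :> R by rewrite -(ler_int R) in l0p_le.
  rewrite -mulr_natl in sumy_le; nra.
- apply: hbmin_le; first by case: hlamu.
  have [q [Sq l0q]] := opt_dual0_Sbeta hlamu.
  by exists q; rewrite l0q.
Qed.
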